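(* Let $L$ be a finite semimodular lattice with exactly two coatoms and $U$ a finite semimodular lattice with exactly two atoms. Then any vertical 2-sum $L +_2 U$ is a semimodular lattice.
   Context: Semimodular means upper semimodular: whenever $s,t \succ s \wedge t$ (covering relations), then $s,t \prec s \vee t$. Let $L' = L \setminus \{\top_L\}$ and $U' = U \setminus \{\bot_U\}$. A vertical 2-sum $L +_2 U$ is the poset obtained from the disjoint union of $L'$ and $U'$ by identifying the two coatoms of $L$ with the two atoms of $U$ via some bijection; $x \le y$ iff $x,y \in L'$ and $x \le_L y$, or $x,y \in U'$ and $x \le_U y$, or $x \in L'$, $y \in U'$ and there is an identified element $c$ with $x \le_L c$ and $c \le_U y$. (This poset is a lattice.) *)

From HB Require Import structures.
From mathcomp Require Import all_boot all_order.
Set Implicit Arguments. Unset Strict Implicit. Unset Printing Implicit Defensive.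
Import Order.TTheory.
Local Open Scope order_scope.

Definition lt_r (T : eqType) (le : rel T) (x y : T) : bool := (x != y) && le x y.

Definition covers_r (T : finType) (le : rel T) (x y : T) : bool :=
  lt_r le x y && [forall z, ~~ (lt_r le x z && lt_r le z y)].

Definition is_meet_r (T : finType) (le : rel T) (x y m : T) : Prop :=
  [/\ le m x, le m y & forall z, le z x -> le z y -> le z m].
Definition is_join_r (T : finType) (le : rel T) (x y j : T) : Prop :=
  [/\ le x j, le y j & forall z, le x z -> le y z -> le j z].

Definition is_lattice_r (T : finType) (le : rel T) : Prop :=
  [/\ reflexive le, antisymmetric le, transitive le &
      forall x y, (exists m, is_meet_r le x y m) /\ (exists j, is_join_r le x y j)].

Definition semimodular_r (T : finType) (le : rel T) : Prop :=
  forall s t m j, is_meet_r le s t m -> is_join_r le s t j ->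
    covers_r le m s -> covers_r le m t -> covers_r le s j /\ covers_r le t j.

Definition semimodular (d : Order.disp_t) (L : finTBLatticeType d) : Prop :=
  forall s t : L, covers_r (<=%O : rel L) (s `&` t) s ->
                  covers_r (<=%O : rel L) (s `&` t) t ->
    covers_r (<=%O : rel L) s (s `|` t) /\ covers_r (<=%O : rel L) t (s `|` t).

Definition coatom (d : Order.disp_t) (L : finTBLatticeType d) (c : L) : bool :=
  covers_r (<=%O : rel L) c \top.
Definition atom (d : Order.disp_t) (L : finTBLatticeType d) (a : L) : bool :=
  covers_r (<=%O : rel L) \bot a.

Definition Lpart (d : Order.disp_t) (L : finTBLatticeType d) : finType :=
  {x : L | x != \top}.
(* U' minus the two atoms a1,a2: the atoms of U are represented by the
   coatoms of L they are identified with (c1 ~ a1, c2 ~ a2). *)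
Definition Upart (d : Order.disp_t) (U : finTBLatticeType d) (a1 a2 : U) : finType :=
  {y : U | [&& y != \bot, y != a1 & y != a2]}.

(* The order of L +_2 U, where coatom c1 of L is identified with atom a1 of U
   and coatom c2 with atom a2. *)
Definition vsum_le (dL dU : Order.disp_t) (L : finTBLatticeType dL)
  (U : finTBLatticeType dU) (c1 c2 : L) (a1 a2 : U)
  (x y : (Lpart L + Upart a1 a2)%type) : bool :=
  match x, y with
  | inl a, inl b => val a <= val b
  | inr u, inr v => val u <= val v
  | inl a, inr v => ((val a <= c1) && (a1 <= val v)) || ((val a <= c2) && (a2 <= val v))
  | inr _, inl _ => false
  end.
Arguments vsum_le {dL dU L U} c1 c2 a1 a2 x y.

From mathcomp Require Import all_boot all_order.
Import Order.TTheory.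
Local Open Scope order_scope.

Set Implicit Arguments.
Unset Strict Implicit.
Unset Printing Implicit Defensive.

(* Every element of L' lies below a coatom c_i and every element of U' above an
   atom a_i, so comparisons across the seam pass through a glued pair c_i ~ a_i.
   Joins in the sum are computed explicitly (the only new one is c1 `|` c2, which
   becomes a1 `|` a2), and meets then exist because the sum is finite with a
   bottom.  The covers of the sum are those of L' and of U', plus c_i covered by
   v exactly when a_i is covered by v in U.  Hence each instance of
   semimodularity in the sum is one in L or in U, except that c1 and c2 must be
   covered by a1 `|` a2, which holds because a1 and a2 are, by semimodularity
   of U. *)

Lemma coversP (T : finType) (le : rel T) x y :
  reflect [/\ x != y, le x y & forall z, le x z -> le z y -> z = x \/ z = y]
          (covers_r le x y).
Proof.
apply: (iffP andP) => [[/andP[nxy lxy] /forallP between]|[nxy lxy between]].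
  split=> // z lxz lzy; move: (between z); rewrite /lt_r lxz lzy !andbT.
  by case: (eqVneq x z) => [->|_]; [left | case: (eqVneq z y) => [->|]; [right|]].
split; first by apply/andP.
apply/forallP => z; apply/negP => /andP[/andP[nxz lxz] /andP[nzy lzy]].
by case: (between z lxz lzy) => Ez; [move: nxz | move: nzy]; rewrite Ez eqxx.
Qed.

Lemma covers_r_flip (T : finType) (le : rel T) x y :
  covers_r (fun x y => le y x) x y = covers_r le y x.
Proof.
apply/coversP/coversP => -[nxy lyx between]; rewrite eq_sym; split=> // z h1 h2;
  by case: (between z h2 h1); [right | left].
Qed.

Section FinitePosets.
Variables (T : finType) (le : rel T).
Hypotheses (le_refl : reflexive le) (le_anti : antisymmetric le) (le_trans : transitive le).

Lemma exists_cover x t : x != t -> le x t -> exists2 c, covers_r le c t & le x c.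
Proof.
move=> nxt lxt; pose below_t c := [&& c != t, le x c & le c t].
pose interval c := #|[pred z | le c z && le z t]|.
have below_x : below_t x by rewrite /below_t nxt lxt le_refl.
case: (arg_minnP interval below_x) => c /and3P[nct lxc lct] c_min.
exists c => //; apply/coversP; split=> // z lcz lzt.
case: (eqVneq z c) => [|nzc]; [by left | case: (eqVneq z t) => [|nzt]; [by right|]].
suff : (interval z < interval c)%N.
  by rewrite ltnNge c_min // /below_t nzt lzt (le_trans lxc).
apply/proper_card/properP; split.
  by apply/subsetP => w /andP[lzw lwt]; rewrite inE (le_trans lcz lzw) lwt.
exists c; rewrite !inE ?le_refl ?lct //.
by apply: contra nzc => /andP[lzc _]; apply/eqP/le_anti; rewrite lzc lcz.
Qed.

Lemma is_join_r_uniq x y j j' :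
  is_join_r le x y j -> is_join_r le x y j' -> j = j'.
Proof.
by move=> [xj yj jmin] [xj' yj' jmin']; apply: le_anti; rewrite jmin ?jmin'.
Qed.

Lemma is_join_rC x y j : is_join_r le x y j -> is_join_r le y x j.
Proof. by move=> [xj yj jmin]; split=> // z yz xz; apply: jmin. Qed.

Lemma is_join_r_le x y : le x y -> is_join_r le x y y.
Proof. by move=> lxy; split. Qed.

Lemma lattice_of_joins b : (forall x, le b x) ->
  (forall x y, exists j, is_join_r le x y j) -> is_lattice_r le.
Proof.
move=> le_b joins.
have lub (s : seq T) : exists j, (forall z, z \in s -> le z j) /\
    forall u, (forall z, z \in s -> le z u) -> le j u.
  elim: s => [|x s [j [ub_j j_min]]]; first by exists b.
  have [k [xk jk k_min]] := joins x j; exists k; split.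
    by move=> z /predU1P[-> //|zs]; apply: le_trans (ub_j z zs) jk.
  move=> u ub_u; apply: k_min; first by apply: ub_u; rewrite mem_head.
  by apply: j_min => z zs; apply: ub_u; rewrite inE zs orbT.
split=> // x y; split; last exact: joins.
have [m [ub_m m_min]] := lub [seq z <- enum T | le z x && le z y].
exists m; split; try by apply: m_min => z; rewrite mem_filter => /andP[/andP[]].
by move=> z zx zy; apply: ub_m; rewrite mem_filter zx zy mem_enum.
Qed.

End FinitePosets.

Section AtomsCoatoms.
Variables (d : Order.disp_t) (T : finTBLatticeType d).

Lemma coatom_neq_top (c : T) : coatom c -> c != \top.
Proof. by case/coversP. Qed.

Lemma atom_neq_bot (a : T) : atom a -> a != \bot.
Proof. by case/coversP; rewrite eq_sym. Qed.

Lemma coatom_maximal (c x : T) : coatom c -> c <= x -> x != \top -> x = c.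
Proof.
case/coversP => _ _ between cx /negPf.
by case: (between x cx (lex1 x)) => ->; rewrite ?eqxx.
Qed.

Lemma atom_minimal (a x : T) : atom a -> x <= a -> x != \bot -> x = a.
Proof.
case/coversP => _ _ between xa /negPf.
by case: (between x (le0x x) xa) => ->; rewrite ?eqxx.
Qed.

Lemma exists_coatom_ge (x : T) : x != \top -> exists2 c, coatom c & x <= c.
Proof.
move=> xT.
by have [c] := exists_cover (@lexx _ T) (@le_anti _ T) (@le_trans _ T) xT (lex1 x); exists c.
Qed.

End AtomsCoatoms.

Lemma exists_atom_le (d : Order.disp_t) (T : finTBLatticeType d) (x : T) :
  x != \bot -> exists2 a, atom a & a <= x.
Proof.
move=> xB; have [a aB ax] := @exists_coatom_ge _ T^d x xB.
by exists a; rewrite // /atom -covers_r_flip.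
Qed.

Section VerticalSum.
Variables (dL dU : Order.disp_t) (L : finTBLatticeType dL) (U : finTBLatticeType dU).
Variables (c1 c2 : L) (a1 a2 : U).
Hypotheses (c12 : c1 != c2) (coatom_c1 : coatom c1) (coatom_c2 : coatom c2)
  (coatomsL : forall c : L, coatom c -> c = c1 \/ c = c2).
Hypotheses (a12 : a1 != a2) (atom_a1 : atom a1) (atom_a2 : atom a2)
  (atomsU : forall a : U, atom a -> a = a1 \/ a = a2).

Definition c_ (i : bool) := if i then c1 else c2.
Definition a_ (i : bool) := if i then a1 else a2.

Lemma coatom_c_ i : coatom (c_ i). Proof. by case: i. Qed.
Lemma atom_a_ i : atom (a_ i). Proof. by case: i. Qed.

Lemma le_c_ i j : (c_ i <= c_ j) = (i == j).
Proof.
apply/idP/eqP => [cij|-> //].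
have := coatom_maximal (coatom_c_ i) cij (coatom_neq_top (coatom_c_ j)).
by case: i j {cij} => -[] //= E; move: c12; rewrite E eqxx.
Qed.

Lemma le_a_ i j : (a_ i <= a_ j) = (i == j).
Proof.
apply/idP/eqP => [aij|-> //].
have := atom_minimal (atom_a_ j) aij (atom_neq_bot (atom_a_ i)).
by case: i j {aij} => -[] //= E; move: a12; rewrite E eqxx.
Qed.

Lemma exists_le_c_ (x : L) : x != \top -> exists i, x <= c_ i.
Proof.
by case/exists_coatom_ge => c /coatomsL[] -> xc; [exists true | exists false].
Qed.

Lemma exists_a_le (u : U) : u != \bot -> exists i, a_ i <= u.
Proof.
by case/exists_atom_le => a /atomsU[] -> au; [exists true | exists false].
Qed.

Definition in_Upart (u : U) := [&& u != \bot, u != a1 & u != a2].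

Lemma in_Upart_above i u : a_ i <= u -> u != a_ i -> in_Upart u.
Proof.
move=> au nua; apply/and3P; split.
- by apply: contraTneq au => ->; rewrite lex0 (atom_neq_bot (atom_a_ i)).
- by case: i au nua => // au _; apply: contraTneq au => ->; rewrite (le_a_ false true).
- by case: i au nua => // au _; apply: contraTneq au => ->; rewrite (le_a_ true false).
Qed.

Lemma in_Upart_ge (v : Upart a1 a2) u : val v <= u -> in_Upart u.
Proof.
case: v => v /= /and3P[vB va1 va2] vu; have [i av] := exists_a_le vB.
have nva : v != a_ i by case: i av.
apply: (in_Upart_above (le_trans av vu)); apply: contraTneq vu => ->.
by apply: contra nva => va; rewrite (atom_minimal (atom_a_ i) va vB).
Qed.

Lemma in_Upart_atoms_join : in_Upart (a1 `|` a2).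
Proof.
apply: (in_Upart_above (i := true) (leUl _ _)); rewrite /=.
by apply: contraTneq (leUr a2 a1) => ->; rewrite (le_a_ false true).
Qed.

Definition upjoin (v : Upart a1 a2) (u : U) : Upart a1 a2 :=
  Sub (val v `|` u) (in_Upart_ge (leUl _ u)).
Definition atoms_join : Upart a1 a2 := Sub (a1 `|` a2) in_Upart_atoms_join.

Local Notation le := (vsum_le c1 c2 a1 a2).

Lemma vsum_le_inl_inr a v :
  reflect (exists i, val a <= c_ i /\ a_ i <= val v) (le (inl a) (inr v)).
Proof.
apply: (iffP orP) => [[/andP[ac av]|/andP[ac av]]|[[] [ac av]]];
  by [exists true | exists false | left; apply/andP | right; apply/andP].
Qed.

Lemma vsum_le_refl : reflexive le.
Proof. by case=> x /=. Qed.

Lemma vsum_le_anti : antisymmetric le.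
Proof.
by case=> x [] y //=; rewrite ?andbF // => /le_anti/val_inj ->.
Qed.

Lemma vsum_le_trans : transitive le.
Proof.
case=> y [] x [] z //=; first exact: le_trans.
- move=> xy /vsum_le_inl_inr[i [yc az]]; apply/vsum_le_inl_inr.
  by exists i; rewrite (le_trans xy yc).
- move=> /vsum_le_inl_inr[i [xc ay]] yz; apply/vsum_le_inl_inr.
  by exists i; rewrite xc (le_trans ay yz).
- exact: le_trans.
Qed.

Lemma le_Lpart_neq_top (z : Lpart L) x : x <= val z -> x != \top.
Proof.
by move=> xz; apply: contraNneq (valP z) => xT; rewrite -le1x (le_trans _ xz) // le1x xT.
Qed.

Lemma Upart_neq_bot (v : Upart a1 a2) : val v != \bot.
Proof. by case/and3P: (valP v). Qed.

Lemma Upart_neq_a (v : Upart a1 a2) i : val v != a_ i.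
Proof. by case/and3P: (valP v); case: i. Qed.

Lemma bot_neq_top : (\bot : L) != \top.
Proof.
by apply: contraNneq (coatom_neq_top coatom_c1) => bT; rewrite -le1x -bT le0x.
Qed.

Lemma vsum_le_bot x : le (inl (Sub \bot bot_neq_top)) x.
Proof.
case: x => [a|v]; first exact: le0x.
have [i av] := exists_a_le (Upart_neq_bot v).
by apply/vsum_le_inl_inr; exists i; rewrite le0x.
Qed.

Lemma is_join_inr_inr u v : is_join_r le (inr u) (inr v) (inr (upjoin u (val v))).
Proof. by split=> /=; [exact: leUl | exact: leUr | case=> //= w; rewrite leUx => ->]. Qed.

Lemma is_join_inl_inl a b (j : Lpart L) :
  val j = val a `|` val b -> is_join_r le (inl a) (inl b) (inl j).
Proof.
move=> jE; split; [by rewrite /= jE leUl | by rewrite /= jE leUr |].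
case=> [z|w]; first by rewrite /= jE leUx => ->.
move=> /vsum_le_inl_inr[i [ac aw]] /vsum_le_inl_inr[k [bc bw]].
apply/vsum_le_inl_inr; case: (eqVneq i k) => [ik|nik].
  by subst k; exists i; rewrite jE leUx ac bc.
have [l jc] := exists_le_c_ (valP j).
by exists l; split=> //; case: l i k nik aw bw {ac bc jc} => [] [] [].
Qed.

Lemma is_join_inl_inl_top a b :
  val a `|` val b = \top -> is_join_r le (inl a) (inl b) (inr atoms_join).
Proof.
move=> abT; have below_c (x : Lpart L) : exists i, val x <= c_ i /\ a_ i <= a1 `|` a2.
  by have [i xc] := exists_le_c_ (valP x); exists i; case: i xc; rewrite ?leUl ?leUr.
split; try by apply/vsum_le_inl_inr; apply: below_c.
case=> [z|w].
  move=> /= az bz; have := @le_Lpart_neq_top z (val a `|` val b).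
  by rewrite leUx az bz abT eqxx; apply.
move=> /vsum_le_inl_inr[i [ac aw]] /vsum_le_inl_inr[k [bc bw]].
case: (eqVneq i k) => [ik|nik].
  by subst k; have := coatom_neq_top (coatom_c_ i); rewrite -le1x -abT leUx ac bc.
by rewrite /= leUx; case: i k nik aw bw {ac bc} => [] [] // _ -> ->.
Qed.

Lemma is_join_inl_inr a v i : ~~ le (inl a) (inr v) -> val a <= c_ i ->
  is_join_r le (inl a) (inr v) (inr (upjoin v (a_ i))).
Proof.
move=> nav ac; split; first by apply/vsum_le_inl_inr; exists i; split=> //; apply: leUr.
  exact: leUl.
case=> [z _ //|w] /vsum_le_inl_inr[k [ak akw]] /= vw; rewrite leUx vw.
case: (eqVneq k i) => [<- //|nki]; have [l av] := exists_a_le (Upart_neq_bot v).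
case/negP: nav; apply/vsum_le_inl_inr; exists l; split=> //.
by case: l i k nki ac ak {av akw} => [] [] [].
Qed.

Lemma vsum_joins x y : exists j, is_join_r le x y j.
Proof.
have inl_inr a v : exists j, is_join_r le (inl a) (inr v) j.
  case: (boolP (le (inl a) (inr v))) => [av|nav].
    by exists (inr v); apply: (is_join_r_le vsum_le_refl av).
  have [i ac] := exists_le_c_ (valP a).
  by exists (inr (upjoin v (a_ i))); apply: is_join_inl_inr.
case: x y => [a|u] [b|v].
- case: (eqVneq (val a `|` val b) \top) => [abT|abT].
    by exists (inr atoms_join); apply: is_join_inl_inl_top.
  by exists (inl (Sub (val a `|` val b) abT : Lpart L)); apply: is_join_inl_inl.
- exact: inl_inr.
- by have [j /is_join_rC] := inl_inr b u; exists j.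
- by exists (inr (upjoin u (val v))); apply: is_join_inr_inr.
Qed.

Lemma vsum_lattice : is_lattice_r le.
Proof.
exact: lattice_of_joins vsum_le_refl vsum_le_anti vsum_le_trans _ vsum_le_bot vsum_joins.
Qed.

Lemma covers_inl a b : covers_r le (inl a) (inl b) = covers_r <=%O (val a) (val b).
Proof.
apply/coversP/coversP => -[nab ab between]; split=> //.
- move=> z az zb; have zT := le_Lpart_neq_top zb.
  by case: (between (inl (Sub z zT)) az zb) => -[<-]; [left | right].
- case=> [z az zb|//].
  by case: (between _ az zb) => /val_inj ->; [left | right].
Qed.

Lemma covers_inr u v : covers_r le (inr u) (inr v) = covers_r <=%O (val u) (val v).
Proof.
apply/coversP/coversP => -[nuv uv between]; split=> //.
- move=> z uz zv; have zU := in_Upart_ge uz.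
  by case: (between (inr (Sub z zU)) uz zv) => -[<-]; [left | right].
- case=> [//|w uw wv].
  by case: (between _ uw wv) => /val_inj ->; [left | right].
Qed.

Lemma covers_inl_inr a v :
  reflect (exists i, val a = c_ i /\ covers_r <=%O (a_ i) (val v))
          (covers_r le (inl a) (inr v)).
Proof.
apply: (iffP idP) => [/coversP[_ /vsum_le_inl_inr[i [ac av]] between]|].
  pose ci : Lpart L := Sub (c_ i) (coatom_neq_top (coatom_c_ i)).
  have civ : le (inl ci) (inr v) by apply/vsum_le_inl_inr; exists i; rewrite lexx.
  have [[<-]|//] := between (inl ci) ac civ; exists i; split=> //.
  apply/coversP; split=> //; first by rewrite eq_sym Upart_neq_a.
  move=> z az zv; case: (eqVneq z (a_ i)) => [->|nza]; [by left | right].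
  have zU := in_Upart_above az nza.
  have a_z : le (inl a) (inr (Sub z zU)) by apply/vsum_le_inl_inr; exists i.
  by case: (between _ a_z zv) => // -[<-].
move=> [i [aE /coversP[_ av between]]]; apply/coversP.
split=> //; first by apply/vsum_le_inl_inr; exists i; rewrite aE lexx.
case=> [b ab _|w /vsum_le_inl_inr[k [ak akw]] wv].
  left; congr inl; apply: val_inj; rewrite aE.
  by apply: (coatom_maximal (coatom_c_ i) _ (valP b)); rewrite -aE.
right; congr inr; apply: val_inj; move: ak; rewrite aE le_c_ => /eqP ik; subst k.
by case: (between _ akw wv) => // wE; move: (Upart_neq_a w i); rewrite wE eqxx.
Qed.

Lemma is_meet_inl_inl_val a b m :
  is_meet_r le (inl a) (inl b) (inl m) -> val m = val a `&` val b.
Proof.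
move=> [ma mb m_max]; have abT := le_Lpart_neq_top (leIl (val a) (val b)).
apply/le_anti/andP; split; first by rewrite lexI; apply/andP.
exact: (m_max (inl (Sub (val a `&` val b) abT : Lpart L)) (leIl _ _) (leIr _ _)).
Qed.

Lemma is_meet_inr_inr_val u v m :
  is_meet_r le (inr u) (inr v) (inr m) -> val m = val u `&` val v.
Proof.
move=> [mu mv m_max]; have muv : val m <= val u `&` val v by rewrite lexI; apply/andP.
apply/le_anti; rewrite muv.
have uvU := in_Upart_ge muv.
exact: (m_max (inr (Sub (val u `&` val v) uvU : Upart a1 a2)) (leIl _ _) (leIr _ _)).
Qed.

Lemma is_meet_inl_atom u v m i : a_ i <= val u -> a_ i <= val v ->
  is_meet_r le (inr u) (inr v) (inl m) -> val u `&` val v = a_ i.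
Proof.
move=> au av [_ _ m_max]; apply/eqP; apply: contraT => nuv.
have auv : a_ i <= val u `&` val v by rewrite lexI au av.
have uvU := in_Upart_above auv nuv.
exact: (m_max (inr (Sub (val u `&` val v) uvU : Upart a1 a2)) (leIl _ _) (leIr _ _)).
Qed.

Lemma covers_inl_not_mixed m a v :
  covers_r le (inl m) (inl a) -> covers_r le (inl m) (inr v) -> False.
Proof.
rewrite covers_inl => /coversP[nma ma _] /covers_inl_inr[i [mE _]].
have aE : val a = c_ i by apply: coatom_maximal (coatom_c_ i) _ (valP a); rewrite -mE.
by move: nma; rewrite mE aE eqxx.
Qed.

Hypotheses (smL : semimodular L) (smU : semimodular U).

Lemma atoms_join_covers i : covers_r <=%O (a_ i) (a1 `|` a2).
Proof.
have a12_bot : a1 `&` a2 = \bot.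
  apply/eqP; apply: contraT => nB.
  by move: (le_a_ true false); rewrite /= -(atom_minimal atom_a1 (leIl a1 a2) nB) leIr.
by have [] := @smU a1 a2; rewrite ?a12_bot //; case: i.
Qed.

Lemma covers_join_inr u v j :
  covers_r <=%O (val u `&` val v) (val u) -> covers_r <=%O (val u `&` val v) (val v) ->
  is_join_r le (inr u) (inr v) j -> covers_r le (inr u) j /\ covers_r le (inr v) j.
Proof.
move=> cu cv uvj; rewrite (is_join_r_uniq vsum_le_anti uvj (is_join_inr_inr u v)).
by rewrite !covers_inr; apply: smU.
Qed.

Lemma covers_join_inl a b j :
  covers_r <=%O (val a `&` val b) (val a) -> covers_r <=%O (val a `&` val b) (val b) ->
  is_join_r le (inl a) (inl b) j -> covers_r le (inl a) j /\ covers_r le (inl b) j.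
Proof.
move=> ca cb abj; have [caj cbj] := smL ca cb.
case: (eqVneq (val a `|` val b) \top) => [abT|abT].
  rewrite (is_join_r_uniq vsum_le_anti abj (is_join_inl_inl_top abT)).
  (* a and b are then the two coatoms, joined in the sum by a1 `|` a2 *)
  rewrite abT in caj cbj; have covers_atoms_join (x : Lpart L) :
      coatom (val x) -> covers_r le (inl x) (inr atoms_join).
    move=> /coatomsL xc; apply/covers_inl_inr.
    by case: xc => xE; [exists true | exists false]; split=> //; apply: atoms_join_covers.
  by split; apply: covers_atoms_join.
have abj' : is_join_r le (inl a) (inl b) (inl (Sub (val a `|` val b) abT))
  by apply: is_join_inl_inl.
by rewrite (is_join_r_uniq vsum_le_anti abj abj') !covers_inl.
Qed.

Lemma vsum_semimodular : semimodular_r le.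
Proof.
move=> s t [m|m] j stm stj.
  case: s t stm stj => [s|s] [t|t] stm stj.
  - rewrite !covers_inl (is_meet_inl_inl_val stm) => cs ct.
    exact: covers_join_inl cs ct stj.
  - by move=> /covers_inl_not_mixed cs /cs.
  - by move=> /[swap] /covers_inl_not_mixed ct /ct.
  move=> /covers_inl_inr[i [mE cs]] /covers_inl_inr[k [mE' ct]].
  have ik : i = k by apply/eqP; rewrite -le_c_ -mE -mE'.
  subst k; move: (cs) (ct) => /coversP[_ ais _] /coversP[_ ait _].
  by apply: covers_join_inr stj; rewrite (is_meet_inl_atom ais ait stm).
case: s t stm stj => [s|s] [t|t] stm stj; try by case/coversP.
rewrite !covers_inr (is_meet_inr_inr_val stm) => cs ct.
exact: covers_join_inr cs ct stj.
Qed.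

End VerticalSum.

Theorem lemma3p5 (dL dU : Order.disp_t) (L : finTBLatticeType dL)
  (U : finTBLatticeType dU) (c1 c2 : L) (a1 a2 : U) :
  semimodular L -> semimodular U ->
  c1 != c2 -> coatom c1 -> coatom c2 -> (forall c : L, coatom c -> c = c1 \/ c = c2) ->
  a1 != a2 -> atom a1 -> atom a2 -> (forall a : U, atom a -> a = a1 \/ a = a2) ->
  is_lattice_r (vsum_le c1 c2 a1 a2) /\ semimodular_r (vsum_le c1 c2 a1 a2).
Proof.
move=> smL smU c12 cc1 cc2 coatomsL a12 aa1 aa2 atomsU.
by split; [apply: vsum_lattice | apply: vsum_semimodular].
Qed.
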